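(* Let $M=T^*\mathbb{T}^2=\{(\phi,\theta,s,t):\phi,\theta\in\mathbb{R}/\pi\mathbb{Z},\ s,t\in\mathbb{R}\}$, $Z=\{\phi=0\}$, and let $\omega_1=\frac{1}{\sin^2\phi}d\phi\wedge d\theta+ds\wedge dt$ and $\omega_2=\frac1{\sin^2\phi}d\phi\wedge ds+d\theta\wedge dt$. Then the symplectic manifolds $(M\setminus Z,\omega_1)$ and $(M\setminus Z,\omega_2)$ are symplectomorphic. *)

From HB Require Import structures.
From mathcomp Require Import all_boot all_order all_algebra.
From mathcomp Require Import all_classical all_reals all_analysis.
Set Implicit Arguments. Unset Strict Implicit. Unset Printing Implicit Defensive.
Import Order.TTheory GRing.Theory Num.Theory.
Import numFieldNormedType.Exports.
Local Open Scope ring_scope.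

(* Coordinates on R^4: index 0 = phi, 1 = theta, 2 = s, 3 = t.
   M = T^* T^2 = R^4 / Lambda with Lambda = pi Z x pi Z x 0 x 0.
   M \ Z is the quotient of the open set U = {x | x_0 notin pi Z} by Lambda. *)

Section Defs.
Variable R : realType.

Definition i0 : 'I_4 := inord 0.
Definition i1 : 'I_4 := inord 1.
Definition i2 : 'I_4 := inord 2.
Definition i3 : 'I_4 := inord 3.

Definition ebasis (i : 'I_4) : 'rV[R]_4 := delta_mx ord0 i.

Definition inLattice (v : 'rV[R]_4) : Prop :=
  exists a b : int, [/\ v ord0 i0 = a%:~R * pi, v ord0 i1 = b%:~R * pi,
                        v ord0 i2 = 0 & v ord0 i3 = 0].

Definition Uset (x : 'rV[R]_4) : Prop := forall k : int, x ord0 i0 != k%:~R * pi.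

Fixpoint ideriv (vs : seq 'I_4) (f : 'rV[R]_4 -> 'rV[R]_4) : 'rV[R]_4 -> 'rV[R]_4 :=
  match vs with
  | [::] => f
  | i :: vs' => fun x => derive (ideriv vs' f) x (ebasis i)
  end.

Definition smooth_on (U : 'rV[R]_4 -> Prop) (f : 'rV[R]_4 -> 'rV[R]_4) : Prop :=
  forall (vs : seq 'I_4) (x : 'rV[R]_4), U x ->
    {for x, continuous (ideriv vs f)} /\
    forall i : 'I_4, derivable (ideriv vs f) x (ebasis i).

Definition omega1 (x u v : 'rV[R]_4) : R :=
  (u ord0 i0 * v ord0 i1 - u ord0 i1 * v ord0 i0) / (sin (x ord0 i0)) ^+ 2
  + (u ord0 i2 * v ord0 i3 - u ord0 i3 * v ord0 i2).

Definition omega2 (x u v : 'rV[R]_4) : R :=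
  (u ord0 i0 * v ord0 i2 - u ord0 i2 * v ord0 i0) / (sin (x ord0 i0)) ^+ 2
  + (u ord0 i1 * v ord0 i3 - u ord0 i3 * v ord0 i1).

(* F : R^4 -> R^4 is a lift of a smooth self-map of U/Lambda *)
Definition lift_map (F : 'rV[R]_4 -> 'rV[R]_4) : Prop :=
  [/\ smooth_on Uset F,
      (forall x, Uset x -> Uset (F x)) &
      (forall x l, Uset x -> inLattice l -> inLattice (F (x + l) - F x))].

(* F, G lift mutually inverse smooth maps of M \ Z, i.e. a diffeomorphism,
   and F pulls omega_2 back to omega_1 *)
Definition symplectomorphism_12 (F G : 'rV[R]_4 -> 'rV[R]_4) : Prop :=
  [/\ lift_map F, lift_map G,
      (forall x, Uset x -> inLattice (G (F x) - x)),
      (forall y, Uset y -> inLattice (F (G y) - y)) &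
      (forall x, Uset x -> forall i j : 'I_4,
          omega2 (F x) (derive F x (ebasis i)) (derive F x (ebasis j))
          = omega1 x (ebasis i) (ebasis j))].

End Defs.

From HB Require Import structures.
From mathcomp Require Import all_boot all_order all_algebra.
From mathcomp Require Import all_classical all_reals all_analysis.
From mathcomp Require Import ring lra zify.
Set Implicit Arguments. Unset Strict Implicit. Unset Printing Implicit Defensive.
Import Order.TTheory GRing.Theory Num.Theory.
Import numFieldNormedType.Exports.
Local Open Scope ring_scope.
Local Open Scope classical_set_scope.

(* The symplectomorphism is explicit:
     F (phi, theta, s, t) = (pi/2 + atan s, theta, t, cot phi),
     G (phi, theta, s, t) = (pi/2 - atan t, theta, - cot phi, s).
   Since sin^2 (pi/2 + atan s) = 1/(1 + s^2) and d(pi/2 + atan s) = ds/(1+s^2),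
   F^* omega_2 = ds/\dt + dtheta/\d(cot phi) = omega_1; G inverts F up to
   shifting phi by a multiple of pi. *)

Section OneVariable.
Variable R : realType.
Implicit Types (D : set R) (g : R -> R).

Definition smooth1 D g :=
  exists gs : nat -> R -> R, gs 0%N = g /\
    forall n y, D y -> is_derive y 1 (gs n) (gs n.+1 y).

Lemma smooth1_from_derive D g g' :
  (forall y, D y -> is_derive y 1 g (g' y)) -> smooth1 D g' -> smooth1 D g.
Proof.
move=> dg [gs [gs0 dgs]].
exists (fun n => if n is m.+1 then gs m else g); split => // -[|n] y Dy /=.
  by rewrite gs0; apply: dg.
exact: dgs.
Qed.

Lemma is_derive_addl g (c y d : R) : is_derive y 1 g d ->
  is_derive y 1 (fun z => c + g z) d.
Proof.
move=> dg; have := is_deriveD (is_derive_cst c y 1) dg.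
have -> : cst c + g = (fun z => c + g z) by apply/funext.
by move/is_derive_eq; apply; rewrite add0r.
Qed.

Lemma smooth1_addl D g (c : R) : smooth1 D g -> smooth1 D (fun z => c + g z).
Proof.
move=> [gs [gs0 dgs]]; exists (fun n => if n is 0 then (fun z => c + g z) else gs n).
split => // -[|n] y Dy /=; last exact: dgs.
by rewrite -gs0; exact: (is_derive_addl c (dgs 0%N y Dy)).
Qed.

Lemma smooth1_opp D g : smooth1 D g -> smooth1 D (fun z => - g z).
Proof.
move=> [gs [gs0 dgs]]; exists (fun n z => - gs n z); split => [|n y Dy].
  by rewrite gs0.
exact: is_deriveN (dgs n y Dy).
Qed.

(* If b solves the autonomous equation b' = r(b) on D, every rational
   expression p(b)/q(b) with q(b) nonvanishing on D is smooth on D: its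
   derivative is again of this form, with numerator (p'q - pq')r and
   denominator q^2. *)
Definition rational_step (r : {poly R}) (pq : {poly R} * {poly R}) :=
  ((pq.1^`() * pq.2 - pq.1 * pq.2^`()) * r, pq.2 * pq.2).

Lemma smooth1_rational D (b : R -> R) (r p q : {poly R}) :
  (forall y, D y -> is_derive y 1 b r.[b y]) ->
  (forall y, D y -> q.[b y] != 0) ->
  smooth1 D (fun y => p.[b y] / q.[b y]).
Proof.
move=> db qb0.
pose pq n := iter n (rational_step r) (p, q).
have den0 n y : D y -> (pq n).2.[b y] != 0.
  elim: n => [|n IH] Dy; first exact: qb0.
  by rewrite /pq iterS /= hornerM mulf_neq0 // IH.
exists (fun n y => (pq n).1.[b y] / (pq n).2.[b y]); split => // n y Dy.
set P := (pq n).1; set Q := (pq n).2.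
have dP : is_derive y 1 (horner P \o b) (P^`().[b y] * r.[b y]).
  by apply: is_derive1_comp => //; exact: db.
have dQ : is_derive y 1 (horner Q \o b) (Q^`().[b y] * r.[b y]).
  by apply: is_derive1_comp => //; exact: db.
have := is_deriveM dP (is_deriveV (f := horner Q \o b) (den0 n y Dy) dQ).
have -> : (horner P \o b) * (fun z => ((horner Q \o b) z)^-1) =
          (fun z => P.[b z] / Q.[b z]) by apply/funext.
move/is_derive_eq; apply.
rewrite /pq iterS -/(pq n) /rational_step /= -/P -/Q !hornerE /=.
rewrite -![_ *: _]/(_ * _); move: (den0 n y Dy); rewrite -/Q => Q0.
by field.
Qed.

Lemma smooth1_id D : smooth1 D id.
Proof.
have := @smooth1_rational D id 1 'X 1.
have -> : (fun y => 'X.[id y] / (1 : {poly R}).[id y]) = id.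
  by apply/funext => y; rewrite hornerX hornerC divr1.
by apply => y _; rewrite hornerC ?oner_neq0 //; exact: is_derive_id.
Qed.

Lemma onePsqr_neq0 (y : R) : 1 + y ^+ 2 != 0.
Proof. by apply: lt0r_neq0; have := sqr_ge0 y; lra. Qed.

(* atan' = 1 / (1 + y^2) is a rational function of the identity. *)
Lemma smooth1_atan D : smooth1 D atan.
Proof.
apply: (smooth1_from_derive (fun y _ => is_derive1_atan y)).
have := @smooth1_rational D id 1 1 ('X^2 + 1).
have -> : (fun y => (1 : {poly R}).[id y] / ('X^2 + 1 : {poly R}).[id y])
          = (fun y => (1 + y ^+ 2)^-1).
  by apply/funext => y; rewrite !hornerE addrC.
apply=> y _; rewrite !hornerE; first exact: is_derive_id.
by rewrite addrC onePsqr_neq0.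
Qed.

Definition cot (y : R) := cos y / sin y.

Lemma is_derive_cot y : sin y != 0 -> is_derive y 1 cot (- (1 + cot y ^+ 2)).
Proof.
move=> s0; have := is_deriveM (is_derive_cos y) (is_deriveV s0 (is_derive_sin y)).
have -> : cos * (fun z => (sin z)^-1) = cot by apply/funext.
move/is_derive_eq; apply; rewrite -![_ *: _]/(_ * _) /cot.
by move: s0; set s := sin y; set c := cos y => s0; field.
Qed.

(* cot solves the autonomous equation cot' = -(1 + cot^2). *)
Lemma smooth1_cot : smooth1 [set y | sin y != 0] cot.
Proof.
have := @smooth1_rational [set y | sin y != 0] cot (- (1 + 'X^2)) 'X 1.
have -> : (fun y => 'X.[cot y] / (1 : {poly R}).[cot y]) = cot.
  by apply/funext => y; rewrite hornerX hornerC divr1.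
apply=> y; last by rewrite hornerC oner_neq0.
by rewrite !hornerE; exact: is_derive_cot.
Qed.

End OneVariable.

Section TrigModPi.
Variable R : realType.
Implicit Types (x y z w : R).

Lemma periodicz (f : R -> R) (T : R) : periodic f T ->
  forall (k : int) x, f (x + T *~ k) = f x.
Proof.
move=> fT [] n x; first exact: periodicn.
by rewrite NegzE mulrNz -[in RHS](subrK (T *+ n.+1) x) periodicn.
Qed.

Lemma cot_periodic : periodic (@cot R) pi.
Proof. by move=> x; rewrite /cot sinDpi cosDpi invrN mulrNN. Qed.

Lemma sqr_sin_periodic : periodic (fun x : R => sin x ^+ 2) pi.
Proof. by move=> x; rewrite /= sinDpi sqrrN. Qed.

Lemma reduce_mod_pi z : exists a : int, 0 <= z - pi *~ a < pi.
Proof.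
exists (Num.floor (z / pi)); have pi0 := pi_gt0 R.
have lo := Num.Theory.floor_le (z / pi); have hi := Num.Theory.floorD1_gt (z / pi).
rewrite ler_pdivlMr // in lo; rewrite intrD ltr_pdivrMr // mulrDl mul1r in hi.
by rewrite -mulrzl subr_ge0 ltrBlDr addrC lo hi.
Qed.

Lemma sqr_sin_shift z (a : int) : sin (z - pi *~ a) ^+ 2 = sin z ^+ 2.
Proof. by rewrite -mulrNz; exact: (periodicz sqr_sin_periodic). Qed.

Lemma sin_neq0 z : (forall k : int, z != k%:~R * pi) -> sin z != 0.
Proof.
move=> zNlat; apply/eqP => sz0; have [a /andP [w0 wpi]] := reduce_mod_pi z.
have /eqP := sqr_sin_shift z a; rewrite sz0 expr0n /= sqrf_eq0 => /eqP sw0.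
move: w0; rewrite le_eqVlt => /orP [/eqP w0 | wgt0].
  by move: (zNlat a); rewrite mulrzl -[z](subrK (pi *~ a)) -w0 add0r eqxx.
by have := @sin_gt0_pi R _ (introT andP (conj wgt0 wpi)); rewrite sw0 ltxx.
Qed.

Lemma off_lattice_0pi w : 0 < w < pi -> forall k : int, w != k%:~R * pi.
Proof.
move=> /andP [w0 wpi] k; apply/eqP => wk; rewrite wk in w0 wpi.
have pi0 := pi_gt0 R.
rewrite pmulr_lgt0 // ltr0z in w0; rewrite -[X in _ < X]mul1r ltr_pM2r // ltrz1 in wpi.
by lia.
Qed.

Lemma atan_range (y : R) : 0 < pi / 2 + atan y < pi /\ 0 < pi / 2 - atan y < pi.
Proof.
have := atan_gtNpi2 y; have := atan_ltpi2 y; have := pi_gt0 R.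
by split; apply/andP; split; lra.
Qed.

Lemma cot_pihalfB w : cot (pi / 2 - w) = tan w.
Proof. by rewrite /cot -opprB sinN cosN sinBpihalf cosBpihalf opprK. Qed.

Lemma cot_pihalfD w : cot (pi / 2 + w) = - tan w.
Proof. by rewrite /cot addrC sinDpihalf cosDpihalf /tan mulNr. Qed.

Lemma tan_pihalfB w : tan (pi / 2 - w) = cot w.
Proof. by rewrite /tan /cot -opprB sinN cosN sinBpihalf cosBpihalf opprK. Qed.

Lemma pihalfB_atan_cot z : sin z != 0 ->
  exists a : int, pi / 2 - atan (cot z) = z + a%:~R * pi.
Proof.
move=> sz0; have [a /andP [wge0 wpi]] := reduce_mod_pi z.
set w := z - pi *~ a in wge0 wpi *.
have wgt0 : 0 < w.
  rewrite lt_neqAle wge0 andbT; apply: contra sz0 => /eqP w0.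
  by rewrite -sqrf_eq0 -(sqr_sin_shift z a) -/w -w0 sin0 expr0n.
have -> : atan (cot z) = pi / 2 - w.
  rewrite -(periodicz cot_periodic (- a)) mulrNz -tan_pihalfB tanK //.
  by rewrite in_itv /= -/w; have := pi_gt0 R => pi0; apply/andP; split; lra.
by exists (- a); rewrite mulrzl mulrNz /w; lra.
Qed.

(* The two conformal factors 1/sin^2 phi occurring in the pullback. *)
Lemma sqr_sin_pihalfD_atan (y : R) : sin (pi / 2 + atan y) ^+ 2 = (1 + y ^+ 2)^-1.
Proof.
rewrite addrC sinDpihalf cos_atan exprVn sqr_sqrtr //.
by have := sqr_ge0 y; lra.
Qed.

Lemma sqr_sin_cot z : sin z != 0 -> sin z ^+ 2 = (1 + cot z ^+ 2)^-1.
Proof.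
move=> sz0; have := cos2Dsin2 z; rewrite /cot.
move: sz0; set c := cos z; set s := sin z => sz0 cs1.
suff -> : 1 + (c / s) ^+ 2 = (s ^+ 2)^-1 by rewrite invrK.
by rewrite -[(s ^+ 2)^-1]div1r -{2}cs1; field.
Qed.

End TrigModPi.

Section SeparatedMaps.
Variable R : realType.
Local Notation V4 := 'rV[R]_4.

Lemma is_derive_coord (h : R -> R) (k i : 'I_4) (x : V4) (d : R) :
  is_derive (x ord0 k) ((k == i)%:R : R) h d ->
  is_derive x (ebasis R i) (fun y : V4 => h (y ord0 k)) d.
Proof.
move=> [dh dh_val].
have quotE : (fun t : R => t^-1 *: (((fun y : V4 => h (y ord0 k)) \o shift x)
                 (t *: ebasis R i) - h (x ord0 k)))
  = (fun t : R => t^-1 *: ((h \o shift (x ord0 k)) (t *: ((k == i)%:R : R))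
                 - h (x ord0 k))).
  by apply/funext => t /=; rewrite !mxE eqxx.
by split; rewrite ?/derivable ?/derive quotE.
Qed.

Lemma is_derive_row (M : V4 -> V4) (x v dM : V4) :
  (forall j, is_derive x v (fun y => M y ord0 j) (dM ord0 j)) -> is_derive x v M dM.
Proof.
move=> dMj.
have dM_ex : derivable M x v.
  by apply/derivable_mxP => a j; rewrite (ord1 a); case: (dMj j).
split => //; rewrite derive_mx //; apply/rowP => j; rewrite mxE.
by case: (dMj j).
Qed.

Variable k : 'I_4 -> 'I_4.

Definition sepmap (g : 'I_4 -> R -> R) (x : V4) : V4 := \row_j g j (x ord0 (k j)).

Lemma sepmap_coord (g : 'I_4 -> R -> R) j :
  (fun y => sepmap g y ord0 j) = (fun y => g j (y ord0 (k j))).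
Proof. by apply/funext => y; rewrite mxE. Qed.

Lemma is_derive_sepmap (g : 'I_4 -> R -> R) (dg : 'I_4 -> R) (x : V4) i :
  (forall j, k j = i -> is_derive (x ord0 (k j)) 1 (g j) (dg j)) ->
  is_derive x (ebasis R i) (sepmap g) (\row_j if i == k j then dg j else 0).
Proof.
move=> dg_ok; apply: is_derive_row => j; rewrite sepmap_coord mxE.
apply: is_derive_coord; rewrite eq_sym.
by case: eqP => [kji | _]; [exact: dg_ok | exact: is_derive0].
Qed.

Lemma continuous_sepmap (g : 'I_4 -> R -> R) (x : V4) :
  (forall j, {for x ord0 (k j), continuous (g j)}) -> {for x, continuous (sepmap g)}.
Proof.
move=> g_cont.
have -> : sepmap g = (fun y => \sum_(j < 4) g j (y ord0 (k j)) *: delta_mx ord0 j).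
  by apply/funext => y; rewrite [LHS]row_sum_delta; apply: eq_bigr => j _; rewrite mxE.
apply: (cvg_big add_continuous) => [|j _]; first exact: nbhs_filter.
apply: continuousZr_tmp.
exact: (continuous_comp (@coord_continuous R 1 4 ord0 (k j) x) (g_cont j)).
Qed.

Section Towers.
Variables (gs : 'I_4 -> nat -> R -> R) (D : 'I_4 -> set R) (S : set V4).
Hypothesis S_open : open S.
Hypothesis S_dom : forall x, S x -> forall j, D j (x ord0 (k j)).
Hypothesis gs_tower : forall j n y, D j y -> is_derive y 1 (gs j n) (gs j n.+1 y).

(* Coordinates of the iterated partial derivative of sepmap along the
   directions vs: the (size vs)-th derivative of gs j 0 if every direction
   is k j, and 0 otherwise. *)
Definition partial_coord (vs : seq 'I_4) (j : 'I_4) : R -> R :=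
  if all (pred1 (k j)) vs then gs j (size vs) else cst 0.

Lemma is_derive_partial vs x i : S x ->
  is_derive x (ebasis R i) (sepmap (partial_coord vs))
    (sepmap (partial_coord (i :: vs)) x).
Proof.
move=> Sx; apply: is_derive_eq.
  apply: (is_derive_sepmap (dg := fun j => partial_coord (i :: vs) j (x ord0 (k j)))).
  move=> j kji; rewrite /partial_coord /= kji eqxx /=.
  by case: ifP => _; [rewrite -kji; exact/gs_tower/S_dom | exact: is_derive_cst].
apply/rowP => j; rewrite !mxE /partial_coord /= eq_sym.
by case: eqP.
Qed.

Lemma ideriv_sepmap vs x : S x ->
  ideriv vs (sepmap (partial_coord [::])) x = sepmap (partial_coord vs) x.
Proof.
elim: vs x => [|i vs IH] x Sx //=.
have S_near : \forall y \near x, S y by move: S_open; rewrite openE; apply.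
rewrite (@near_eq_derive R _ _ _ (sepmap (partial_coord vs)) x (ebasis R i)).
  by have [_ ->] := is_derive_partial vs i Sx.
by near=> y; apply: IH; near: y.
Unshelve. all: by end_near. Qed.

Lemma smooth_on_partial (U : set V4) : U `<=` S ->
  smooth_on U (sepmap (partial_coord [::])).
Proof.
move=> US vs x /US Sx.
have S_near : \forall y \near x, S y by move: S_open; rewrite openE; apply.
have near_ideriv :
    {near x, sepmap (partial_coord vs) =1 ideriv vs (sepmap (partial_coord [::]))}.
  by near=> y; rewrite ideriv_sepmap //; near: y.
split => [|i].
  rewrite /prop_for /continuous_at (ideriv_sepmap vs Sx).
  apply: cvg_trans (near_eq_cvg near_ideriv) _; apply: continuous_sepmap => j.
  rewrite /partial_coord; case: ifP => _; last exact: cst_continuous.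
  apply/differentiable_continuous/derivable1_diffP.
  by case: (@gs_tower j (size vs) _ (S_dom Sx j)).
apply: (near_eq_derivable near_ideriv).
by case: (is_derive_partial vs i Sx).
Unshelve. all: by end_near. Qed.

End Towers.

Lemma smooth_sepmap (g : 'I_4 -> R -> R) (D : 'I_4 -> set R) (S U : set V4) :
  open S -> U `<=` S -> (forall x, S x -> forall j, D j (x ord0 (k j))) ->
  (forall j, smooth1 (D j) (g j)) -> smooth_on U (sepmap g).
Proof.
move=> S_open US S_dom /choice [gs gsP].
have -> : sepmap g = sepmap (partial_coord gs [::]).
  apply/funext => x; apply/rowP => j; rewrite !mxE /partial_coord /=.
  by case: (gsP j) => ->.
have gs_tower j n y : D j y -> is_derive y 1 (gs j n) (gs j n.+1 y).
  by case: (gsP j) => _; exact.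
exact: (smooth_on_partial S_open S_dom gs_tower US).
Qed.

End SeparatedMaps.

Section Symplectomorphism.
Variable R : realType.
Local Notation V4 := 'rV[R]_4.

Lemma i0E : i0 = @Ordinal 4 0 isT. Proof. exact/val_inj/inordK. Qed.
Lemma i1E : i1 = @Ordinal 4 1 isT. Proof. exact/val_inj/inordK. Qed.
Lemma i2E : i2 = @Ordinal 4 2 isT. Proof. exact/val_inj/inordK. Qed.
Lemma i3E : i3 = @Ordinal 4 3 isT. Proof. exact/val_inj/inordK. Qed.
(* Makes the coordinate names concrete, so that comparisons compute. *)
Definition ordE := (i0E, i1E, i2E, i3E).

Definition Sset : set V4 := [set x | sin (x ord0 i0) != 0].

Lemma open_Sset : open Sset.
Proof.
have -> : Sset = (fun x : V4 => sin (x ord0 i0)) @^-1` [set y | y != 0] by [].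
apply: open_comp; last exact: open_neq.
move=> x _; apply: (continuous_comp (@coord_continuous R 1 4 ord0 i0 x)).
exact: continuous_sin.
Qed.

Lemma Uset_Sset : @Uset R `<=` Sset.
Proof. by move=> x; exact: sin_neq0. Qed.

Lemma cot_lattice (z : R) (a : int) : cot (z + a%:~R * pi) = cot z.
Proof. by rewrite mulrzl; exact: (periodicz (@cot_periodic R)). Qed.

(* F (phi, theta, s, t) = (pi/2 + atan s, theta, t, cot phi) *)
Definition F_index : 'I_4 -> 'I_4 := tnth [tuple i2; i1; i3; i0].
Definition F_coord : 'I_4 -> R -> R :=
  tnth [tuple fun y => pi / 2 + atan y; id; id; @cot R].
Definition F_dcoord : 'I_4 -> R -> R :=
  tnth [tuple fun y => (1 + y ^+ 2)^-1; fun _ => 1; fun _ => 1;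
              fun y => - (1 + cot y ^+ 2)].
Definition Fmap : V4 -> V4 := sepmap F_index F_coord.

(* G (phi, theta, s, t) = (pi/2 - atan t, theta, - cot phi, s) *)
Definition G_index : 'I_4 -> 'I_4 := tnth [tuple i3; i1; i0; i2].
Definition G_coord : 'I_4 -> R -> R :=
  tnth [tuple fun y => pi / 2 - atan y; id; fun y => - @cot R y; id].
Definition Gmap : V4 -> V4 := sepmap G_index G_coord.

Definition F_dom : 'I_4 -> set R := tnth [tuple setT; setT; setT; [set y | sin y != 0]].
Definition G_dom : 'I_4 -> set R := tnth [tuple setT; setT; [set y | sin y != 0]; setT].

Lemma FmapE (x : V4) :
  (Fmap x ord0 i0 = pi / 2 + atan (x ord0 i2)) * (Fmap x ord0 i1 = x ord0 i1) *
  (Fmap x ord0 i2 = x ord0 i3) * (Fmap x ord0 i3 = cot (x ord0 i0)).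
Proof. by rewrite /Fmap /sepmap !mxE /F_index /F_coord !ordE /tnth. Qed.

Lemma GmapE (x : V4) :
  (Gmap x ord0 i0 = pi / 2 - atan (x ord0 i3)) * (Gmap x ord0 i1 = x ord0 i1) *
  (Gmap x ord0 i2 = - cot (x ord0 i0)) * (Gmap x ord0 i3 = x ord0 i2).
Proof. by rewrite /Gmap /sepmap !mxE /G_index /G_coord !ordE /tnth. Qed.

Lemma coordD (x y : V4) j : (x + y) ord0 j = x ord0 j + y ord0 j.
Proof. by rewrite !mxE. Qed.

Lemma coordN (x : V4) j : (- x) ord0 j = - x ord0 j.
Proof. by rewrite !mxE. Qed.

Lemma F_dom_Sset (x : V4) : Sset x -> forall j, F_dom j (x ord0 (F_index j)).
Proof. by move=> Sx; case=> -[|[|[|[|//]]]] j4; rewrite /F_dom /F_index /tnth. Qed.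

Lemma G_dom_Sset (x : V4) : Sset x -> forall j, G_dom j (x ord0 (G_index j)).
Proof. by move=> Sx; case=> -[|[|[|[|//]]]] j4; rewrite /G_dom /G_index /tnth. Qed.

Lemma Fmap_smooth : smooth_on (@Uset R) Fmap.
Proof.
apply: (smooth_sepmap open_Sset Uset_Sset F_dom_Sset).
case=> -[|[|[|[|//]]]] j4; rewrite /F_dom /F_coord /tnth /=.
- exact/smooth1_addl/smooth1_atan.
- exact: smooth1_id.
- exact: smooth1_id.
- exact: smooth1_cot.
Qed.

Lemma Gmap_smooth : smooth_on (@Uset R) Gmap.
Proof.
apply: (smooth_sepmap open_Sset Uset_Sset G_dom_Sset).
case=> -[|[|[|[|//]]]] j4; rewrite /G_dom /G_coord /tnth /=.
- exact/smooth1_addl/smooth1_opp/smooth1_atan.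
- exact: smooth1_id.
- exact/smooth1_opp/smooth1_cot.
- exact: smooth1_id.
Qed.

(* Both maps send everything into U: their phi-coordinate lies in (0, pi). *)
Lemma Fmap_Uset (x : V4) : Uset (Fmap x).
Proof.
by rewrite /Uset FmapE; apply: off_lattice_0pi; case: (atan_range (x ord0 i2)).
Qed.

Lemma Gmap_Uset (x : V4) : Uset (Gmap x).
Proof.
by rewrite /Uset GmapE; apply: off_lattice_0pi; case: (atan_range (x ord0 i3)).
Qed.

(* Translating by l = (a pi, b pi, 0, 0) translates the image by (0, b pi, 0, 0). *)
Lemma Fmap_lattice (x l : V4) : inLattice l -> inLattice (Fmap (x + l) - Fmap x).
Proof.
move=> [a [b [l0 l1 l2 l3]]]; exists 0, b.
rewrite !(coordD, coordN) !FmapE !(coordD, coordN) l0 l1 l2 l3 addr0 cot_lattice mul0r.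
by split; rewrite ?subrr // addrC addKr.
Qed.

Lemma Gmap_lattice (x l : V4) : inLattice l -> inLattice (Gmap (x + l) - Gmap x).
Proof.
move=> [a [b [l0 l1 l2 l3]]]; exists 0, b.
rewrite !(coordD, coordN) !GmapE !(coordD, coordN) l0 l1 l2 l3 addr0 cot_lattice mul0r.
by split; rewrite ?subrr // addrC addKr.
Qed.

Lemma Fmap_lift : lift_map Fmap.
Proof.
by split=> [|x _|x l _]; [exact: Fmap_smooth | exact: Fmap_Uset | exact: Fmap_lattice].
Qed.

Lemma Gmap_lift : lift_map Gmap.
Proof.
by split=> [|x _|x l _]; [exact: Gmap_smooth | exact: Gmap_Uset | exact: Gmap_lattice].
Qed.

Lemma GmapK (x : V4) : Uset x -> inLattice (Gmap (Fmap x) - x).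
Proof.
move=> /Uset_Sset Sx; have [a ha] := pihalfB_atan_cot Sx.
exists a, 0; rewrite !(coordD, coordN) !GmapE !FmapE ha cot_pihalfD opprK atanK mul0r.
by split; rewrite ?subrr // addrC addKr.
Qed.

Lemma FmapK (x : V4) : Uset x -> inLattice (Fmap (Gmap x) - x).
Proof.
move=> /Uset_Sset Sx; have [a ha] := pihalfB_atan_cot Sx.
exists a, 0; rewrite !(coordD, coordN) !FmapE !GmapE atanN ha cot_pihalfB atanK mul0r.
by split; rewrite ?subrr // addrC addKr.
Qed.

Lemma F_coord_derive j y : F_dom j y -> is_derive y 1 (F_coord j) (F_dcoord j y).
Proof.
case: j => -[|[|[|[|//]]]] j4; rewrite /F_dom /F_coord /F_dcoord /tnth /= => Dy.
- exact: (is_derive_addl _ (is_derive1_atan y)).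
- exact: is_derive_id.
- exact: is_derive_id.
- exact: is_derive_cot.
Qed.

Lemma Fmap_derive (x : V4) i : Sset x ->
  'D_(ebasis R i) Fmap x =
  \row_j (if i == F_index j then F_dcoord j (x ord0 (F_index j)) else 0).
Proof.
move=> Sx; have dF j : F_index j = i ->
    is_derive (x ord0 (F_index j)) 1 (F_coord j) (F_dcoord j (x ord0 (F_index j))).
  by move=> _; apply/F_coord_derive/F_dom_Sset.
by have [_ ->] := is_derive_sepmap dF.
Qed.

(* F pulls omega_2 back to omega_1: both conformal factors cancel. *)
Lemma Fmap_pullback (x : V4) : Sset x -> forall i j : 'I_4,
  omega2 (Fmap x) ('D_(ebasis R i) Fmap x) ('D_(ebasis R j) Fmap x)
  = omega1 x (ebasis R i) (ebasis R j).
Proof.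
move=> Sx i j; rewrite !Fmap_derive // /omega2 /omega1 FmapE sqr_sin_pihalfD_atan.
rewrite (sqr_sin_cot Sx) /ebasis !mxE /F_index /F_dcoord !ordE /tnth /=.
set s := 1 + x ord0 _ ^+ 2; set c := 1 + cot _ ^+ 2.
have s0 : s != 0 := onePsqr_neq0 _.
have c0 : c != 0 := onePsqr_neq0 _.
by case: i => -[|[|[|[|//]]]] ?; case: j => -[|[|[|[|//]]]] ? /=;
  field; rewrite c0 s0.
Qed.

End Symplectomorphism.

Theorem lemmaA2 (R : realType) :
  exists F G : 'rV[R]_4 -> 'rV[R]_4, symplectomorphism_12 F G.
Proof.
exists (@Fmap R), (@Gmap R); split.
- exact: Fmap_lift.
- exact: Gmap_lift.
- exact: GmapK.
- exact: FmapK.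
- by move=> x /Uset_Sset; exact: Fmap_pullback.
Qed.
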